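(* Let $Q$ be a real symmetric matrix acting on $(\mathbb{R}^M)^{\otimes N}$. Then the following are equivalent: 1. $\langle\psi|Q|\psi\rangle=0$ for all $\psi\in V$; 2. $\sum_{\tau\subseteq\{1,\dots,N\}}Q^{T_\tau}=0$, the sum running over all $2^N$ subsets $\tau$; 3. $Q=\sum_g c_g\bigotimes_{k=1}^N G_{g_k}$ with real coefficients $c_g$, where $c_g=0$ whenever all components of $g=(g_1,\dots,g_N)$ are non-negative.
   Context: $V$ denotes the set of normalized real product vectors $\psi=\psi_1\otimes\cdots\otimes\psi_N$ with $\psi_k\in\mathbb{R}^M$. $Q^{T_\tau}$ is the partial transpose of $Q$ (in the standard basis) on the tensor factors in $\tau$. $\{G_\gamma\}$ is a set of $M^2$ real $M\times M$ matrices (''generalized Gell-Mann matrices'') forming a basis of all real $M\times M$ matrices, orthogonal w.r.t. the Hilbert–Schmidt inner product $(X,Y)\mapsto\mathrm{tr}[XY^T]$, with $G_0=\mathbb{1}$, $G_\gamma$ symmetric for $\gamma\ge0$ (there are $M(M+1)/2$ such indices) and antisymmetric for $\gamma<0$ (there are $M(M-1)/2$ such indices), normalized by $\mathrm{tr}[G_\gamma G_{\gamma'}^T]=2\delta_{\gamma\gamma'}$ for $\gamma,\gamma'\ne0$. The index $g$ ranges over $N$-tuples of such indices. *)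

From HB Require Import structures.
From mathcomp Require Import all_boot all_order all_algebra.
From mathcomp Require Import reals.
Set Implicit Arguments. Unset Strict Implicit. Unset Printing Implicit Defensive.
Import Order.TTheory GRing.Theory Num.Theory.
Local Open Scope ring_scope.

(* The space (R^M)^{\otimes N} has basis indexed by multi-indices
   i = (i_1,...,i_N) with i_k : 'I_M.  We use the finType of such
   multi-indices, and matrices over (R^M)^{\otimes N} are square matrices
   of size #|mindex N M| (= M^N), whose row/column index i : 'I_#|mindex N M|
   is decoded into a multi-index by enum_val (the standard basis order). *)
Definition mindex (N M : nat) := {ffun 'I_N -> 'I_M}.
Definition tdim (N M : nat) := #|{: mindex N M}|.

Definition mi {N M : nat} (i : 'I_(tdim N M)) : mindex N M := enum_val i.
Definition mrank {N M : nat} (a : mindex N M) : 'I_(tdim N M) := enum_rank a.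

Definition tensor_vec {R : nzRingType} {N M : nat} (psi : 'I_N -> 'cV[R]_M)
  : 'cV[R]_(tdim N M) :=
  \col_i \prod_(k < N) psi k (mi i k) 0.

Definition in_V {R : realType} {N M : nat} (v : 'cV[R]_(tdim N M)) : Prop :=
  (exists psi : 'I_N -> 'cV[R]_M, v = tensor_vec psi) /\ (v^T *m v) 0 0 = 1.

Definition expval {R : nzRingType} {n : nat} (Q : 'M[R]_n) (v : 'cV[R]_n) : R :=
  (v^T *m Q *m v) 0 0.

(* partial transpose on the tensor factors in tau (standard basis):
   (Q^{T_tau})_{i,j} = Q_{i',j'} where i'_k = j_k, j'_k = i_k for k in tau,
   and i'_k = i_k, j'_k = j_k otherwise. *)
Definition pt_swap {N M : nat} (tau : {set 'I_N}) (a b : mindex N M) : mindex N M :=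
  [ffun k => if k \in tau then b k else a k].

Definition ptrans {R : Type} {N M : nat} (tau : {set 'I_N})
  (Q : 'M[R]_(tdim N M)) : 'M[R]_(tdim N M) :=
  \matrix_(i, j) Q (mrank (pt_swap tau (mi i) (mi j)))
                   (mrank (pt_swap tau (mi j) (mi i))).

Definition tensor_mx {R : nzRingType} {N M : nat} (A : 'I_N -> 'M[R]_M)
  : 'M[R]_(tdim N M) :=
  \matrix_(i, j) \prod_(k < N) A k (mi i k) (mi j k).

Definition hs {R : nzRingType} {M : nat} (X Y : 'M[R]_M) : R := \tr (X *m Y^T).

(* A family of generalized Gell-Mann matrices, indexed by a finite type Gam.
   nonneg gam  encodes "gam >= 0" and g0 is the index 0. *)
Definition gell_mann_family {R : realType} (M : nat) (Gam : finType)
  (G : Gam -> 'M[R]_M) (nonneg : Gam -> bool) (g0 : Gam) : Prop :=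
     #|{: Gam}| = (M * M)%N
  /\ (forall X : 'M[R]_M, exists c : Gam -> R, X = \sum_(g : Gam) c g *: G g)
  /\ (forall g g', g != g' -> hs (G g) (G g') = 0)
  /\ G g0 = 1%:M /\ nonneg g0
  /\ (forall g g', g != g0 -> g' != g0 -> hs (G g) (G g') = (2 * (g == g')%:R))
  /\ (forall g, nonneg g -> (G g)^T = G g)
  /\ (forall g, ~~ nonneg g -> (G g)^T = - G g)
  /\ (#|[set g | nonneg g]| = (M * (M + 1)) %/ 2)%N
  /\ (#|[set g | ~~ nonneg g]| = (M * (M - 1)) %/ 2)%N.

(* Write B_Q(f, h) for the value of Q between the product vectors
   f_1 ⊗ ... ⊗ f_N and h_1 ⊗ ... ⊗ h_N.  The partial transpose Q^{T_tau} acts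
   on B by exchanging the factors of f and h that lie in tau, so
   P := sum_tau Q^{T_tau} satisfies B_P(f, f) = 2^N B_Q(f, f) and is invariant
   under the exchange of any single factor.  For such a P, polarization in one
   factor gives 2 B_P(f, h) = 0 whenever f and h differ in exactly one factor,
   and induction on the number of differing factors kills B_P on all pairs of
   basis vectors, i.e. P = 0.  For the last equivalence, expand Q in the basis
   of tensor products of Gell-Mann matrices: each of them is an eigenvector of
   every partial transpose with eigenvalue ±1, and the signs sum over tau to
   2^N if all factors are symmetric and to 0 otherwise. *)
From HB Require Import structures.
From mathcomp Require Import all_boot all_order all_algebra.
From mathcomp Require Import reals.
Import Order.TTheory GRing.Theory Num.Theory.
Set Implicit Arguments. Unset Strict Implicit.
Local Open Scope ring_scope.

Lemma prodr_nat_forall (R : comPzSemiRingType) (I : finType) (P : pred I) :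
  \prod_(i : I) (P i)%:R = [forall i, P i]%:R :> R.
Proof.
case: (boolP [forall i, P i]) => [/forallP allP | ].
  by rewrite big1 // => i _; rewrite allP.
by rewrite negb_forall => /existsP [i /negbTE Pi]; rewrite (bigD1 i) //= Pi mul0r.
Qed.

Lemma sum_mindex (V : nmodType) (N M : nat) (F : 'I_(tdim N M) -> V) :
  \sum_i F i = \sum_(a : mindex N M) F (mrank a).
Proof.
by rewrite (reindex mrank) //; exists mi => x _; [exact: enum_rankK | exact: enum_valK].
Qed.

Lemma card_sets_gt0 (T : finType) : (0 < #|{: {set T}}|)%N.
Proof. by apply/card_gt0P; exists set0. Qed.

Section ProductForm.
Variables (R : comNzRingType) (N M : nat).
Implicit Types (f h : 'I_N -> 'cV[R]_M) (P Q : 'M[R]_(tdim N M)).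
Implicit Types (a b : mindex N M) (tau s : {set 'I_N}).

Definition prod_form P f h := ((tensor_vec f)^T *m P *m tensor_vec h) 0 0.

Definition mix tau f h := fun k => if k \in tau then h k else f k.

Definition set_factor f k (x : 'cV[R]_M) := fun j => if j == k then x else f j.

Lemma eq_tensor_vec f f' : f =1 f' -> tensor_vec f = tensor_vec f'.
Proof. by move=> ff'; apply/matrixP => i j; rewrite !mxE; apply: eq_bigr => k _; rewrite ff'. Qed.

Lemma eq_prod_form P f f' h h' : f =1 f' -> h =1 h' -> prod_form P f h = prod_form P f' h'.
Proof. by move=> ff' hh'; rewrite /prod_form (eq_tensor_vec ff') (eq_tensor_vec hh'). Qed.

Lemma prod_formE P f h : prod_form P f h =
  \sum_(a : mindex N M) \sum_(b : mindex N M)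
    (\prod_k f k (a k) 0) * P (mrank a) (mrank b) * \prod_k h k (b k) 0.
Proof.
rewrite /prod_form mxE sum_mindex exchange_big /=; apply: eq_bigr => b _.
rewrite mxE big_distrl sum_mindex /=; apply: eq_bigr => a _.
by rewrite !mxE /mi !enum_rankK.
Qed.

Lemma pt_swapK tau a b : pt_swap tau (pt_swap tau a b) (pt_swap tau b a) = a.
Proof. by apply/ffunP => k; rewrite !ffunE; case: (k \in tau). Qed.

Lemma prod_form_ptrans tau P f h :
  prod_form (ptrans tau P) f h = prod_form P (mix tau f h) (mix tau h f).
Proof.
rewrite !prod_formE !pair_bigA /=.
pose swap (p : mindex N M * mindex N M) := (pt_swap tau p.1 p.2, pt_swap tau p.2 p.1).
have swapK : involutive swap by move=> [a b]; rewrite /swap /= !pt_swapK.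
rewrite (reindex_inj (inv_inj swapK)); apply: eq_bigr => [[a b]] _ /=.
rewrite !mxE /mi !enum_rankK !pt_swapK !(mulrAC _ (P _ _)); congr (_ * _).
rewrite -!big_split /=; apply: eq_bigr => k _.
by rewrite /mix !ffunE; case: (k \in tau); rewrite // mulrC.
Qed.

Lemma prod_form_ptrans_diag tau P f : prod_form (ptrans tau P) f f = prod_form P f f.
Proof. by rewrite prod_form_ptrans; apply: eq_prod_form => k; rewrite /mix; case: ifP. Qed.

Lemma prod_form_sum (I : finType) (F : I -> 'M[R]_(tdim N M)) f h :
  prod_form (\sum_i F i) f h = \sum_i prod_form (F i) f h.
Proof. by rewrite /prod_form mulmx_sumr mulmx_suml summxE. Qed.

Lemma tensor_vec_set_factor f k x i :
  tensor_vec (set_factor f k x) i 0 = x (mi i k) 0 * \prod_(j | j != k) f j (mi i j) 0.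
Proof.
rewrite mxE (bigD1 k) //= /set_factor eqxx; congr (_ * _).
by apply: eq_bigr => j /negbTE ->.
Qed.

Lemma tensor_vec_set_factorD f k x y : tensor_vec (set_factor f k (x + y)) =
  tensor_vec (set_factor f k x) + tensor_vec (set_factor f k y).
Proof.
by apply/matrixP => i j; rewrite ord1 [in RHS]mxE !tensor_vec_set_factor mxE mulrDl.
Qed.

Lemma tensor_vec_set_factorZ f k c :
  tensor_vec (set_factor f k (c *: f k)) = c *: tensor_vec f.
Proof.
apply/matrixP => i j; rewrite ord1 tensor_vec_set_factor !mxE [in RHS](bigD1 k) //=.
by rewrite mulrA.
Qed.

Lemma prod_form_set_factorDl P f h k x y :
  prod_form P (set_factor f k (x + y)) h =
  prod_form P (set_factor f k x) h + prod_form P (set_factor f k y) h.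
Proof. by rewrite /prod_form tensor_vec_set_factorD linearD /= !mulmxDl mxE. Qed.

Lemma prod_form_set_factorDr P f h k x y :
  prod_form P f (set_factor h k (x + y)) =
  prod_form P f (set_factor h k x) + prod_form P f (set_factor h k y).
Proof. by rewrite /prod_form tensor_vec_set_factorD !mulmxDr mxE. Qed.

Lemma tensor_vec_delta a :
  tensor_vec (fun k => delta_mx (a k) 0) = delta_mx (mrank a) 0 :> 'cV[R]__.
Proof.
apply/matrixP => i z; rewrite ord1 !mxE eqxx andbT.
under eq_bigr do rewrite mxE eqxx andbT.
rewrite prodr_nat_forall -(can_eq (@enum_valK _)) enum_rankK.
congr (nat_of_bool _)%:R.
by apply/forallP/eqP => [eq_ia | <- k //]; apply/ffunP => k; apply/eqP.
Qed.

Lemma prod_form_delta P a b :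
  prod_form P (fun k => delta_mx (a k) 0) (fun k => delta_mx (b k) 0) = P (mrank a) (mrank b).
Proof. by rewrite /prod_form !tensor_vec_delta trmx_delta -rowE -colE !mxE. Qed.

Definition symdiff tau s := [set k | (k \in tau) (+) (k \in s)].

Lemma symdiffK s : involutive (symdiff^~ s).
Proof. by move=> tau; apply/setP => k; rewrite !inE addbK. Qed.

Lemma prod_form_sum_ptrans_diag Q f :
  prod_form (\sum_tau ptrans tau Q) f f = prod_form Q f f *+ #|{: {set 'I_N}}|.
Proof.
by rewrite prod_form_sum (eq_bigr _ (fun tau _ => prod_form_ptrans_diag tau Q f)) sumr_const.
Qed.

Lemma prod_form_sum_ptrans_mix Q s f h :
  prod_form (\sum_tau ptrans tau Q) f h =
  prod_form (\sum_tau ptrans tau Q) (mix s f h) (mix s h f).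
Proof.
rewrite !prod_form_sum [RHS](reindex_inj (inv_inj (symdiffK s))).
apply: eq_bigr => tau _; rewrite !prod_form_ptrans.
by apply: eq_prod_form => k; rewrite /mix inE; case: (k \in tau); case: (k \in s).
Qed.

End ProductForm.

Section Polarization.
Variables (R : numDomainType) (N M : nat) (P : 'M[R]_(tdim N M)).
Implicit Types (f h : 'I_N -> 'cV[R]_M).

Hypothesis P_diag : forall f, prod_form P f f = 0.
Hypothesis P_mix :
  forall k f h, prod_form P f h = prod_form P (mix [set k] f h) (mix [set k] h f).

Lemma prod_form_eq0_differ n f h :
  (#|[set k | f k != h k]| <= n)%N -> prod_form P f h = 0.
Proof.
elim: n f h => [|n IHn] f h.
  rewrite leqn0 cards_eq0 => /eqP fh; rewrite -(P_diag f); apply: eq_prod_form => // k.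
  by move/setP/(_ k): fh; rewrite !inE => /negbFE/eqP ->.
case: (set_0Vmem [set k | f k != h k]) => [fh0 _ | [k fhk] le_fh_n].
  by apply: IHn; rewrite fh0 cards0.
pose f' := set_factor f k; pose h' := set_factor h k.
have diag0 x : prod_form P (f' x) (h' x) = 0.
  apply: IHn; rewrite -ltnS; apply: leq_trans le_fh_n.
  rewrite (cardsD1 k [set j | f j != h j]) fhk ltnS.
  apply: subset_leq_card; apply/subsetP => j; rewrite !inE /f' /h' /set_factor.
  by case: (j == k); rewrite //= eqxx.
have f'fk : prod_form P (f' (f k)) (h' (h k)) = prod_form P f h.
  by apply: eq_prod_form => j; rewrite /f' /h' /set_factor; case: eqP => // ->.
have f'hk : prod_form P (f' (h k)) (h' (f k)) = prod_form P f h.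
  rewrite (P_mix k); apply: eq_prod_form => j;
  by rewrite /mix /f' /h' /set_factor inE; case: eqP => // ->.
(* polarize the k-th factor at f_k + h_k *)
have := diag0 (f k + h k).
rewrite prod_form_set_factorDl !prod_form_set_factorDr !diag0 add0r addr0 f'fk f'hk.
by move/eqP; rewrite -mulr2n mulrn_eq0 => /eqP.
Qed.

Lemma prod_form_eq0 : P = 0.
Proof.
apply/matrixP => i j; rewrite mxE -(enum_valK i) -(enum_valK j).
rewrite -[enum_rank _]/(mrank (mi i)) -[enum_rank (enum_val j)]/(mrank (mi j)).
rewrite -prod_form_delta; apply: (@prod_form_eq0_differ N).
by apply: leq_trans (max_card _) _; rewrite card_ord.
Qed.

End Polarization.

Lemma sum_ptrans_eq0 (R : numDomainType) (N M : nat) (Q : 'M[R]_(tdim N M)) :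
  \sum_(tau : {set 'I_N}) ptrans tau Q = 0 <-> forall f, prod_form Q f f = 0.
Proof.
split=> [P0 f | Q_diag].
  have := prod_form_sum_ptrans_diag Q f; rewrite P0.
  have -> : prod_form 0 f f = 0 by rewrite /prod_form mulmx0 mul0mx mxE.
  by move/esym/eqP; rewrite mulrn_eq0 eqn0Ngt card_sets_gt0 => /eqP.
apply: prod_form_eq0 => [f | k f h]; last exact: prod_form_sum_ptrans_mix.
by rewrite prod_form_sum_ptrans_diag Q_diag mul0rn.
Qed.

Lemma trmx_mul_self_eq0 (R : realDomainType) n (v : 'cV[R]_n) :
  (v^T *m v) 0 0 = 0 -> v = 0.
Proof.
move=> vv0; apply/matrixP => i j; rewrite ord1 mxE; apply/eqP; rewrite -sqrf_eq0; apply/eqP.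
apply: (@psumr_eq0P _ _ predT (fun i => v i 0 ^+ 2)) => // [k _ | ]; first exact: sqr_ge0.
by rewrite -[RHS]vv0 mxE; apply: eq_bigr => k _; rewrite mxE expr2.
Qed.

Lemma vanish_on_V (R : realType) (N M : nat) (Q : 'M[R]_(tdim N M)) :
  (forall v, in_V v -> expval Q v = 0) <-> forall f, prod_form Q f f = 0.
Proof.
split=> [QV0 f | Q_diag v [[f ->] _]]; last exact: Q_diag.
set v := tensor_vec f; set s := (v^T *m v) 0 0.
have [s0 | s_neq0] := eqVneq s 0.
  by rewrite /prod_form -/v (trmx_mul_self_eq0 s0) mulmx0 mxE.
(* With no tensor factor to absorb the normalization, the product vector is (1). *)
case: (posnP N) => [N0 | N_gt0].
  apply: QV0; split; first by exists f.
  subst N; rewrite mxE (eq_bigr (fun _ => 1)) => [|i _]; last by rewrite !mxE big_ord0 mul1r.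
  by rewrite sumr_const card_ord /tdim card_ffun !card_ord expn0.
have s_gt0 : 0 < s.
  by rewrite lt0r s_neq0 /s mxE sumr_ge0 // => i _; rewrite mxE -expr2 sqr_ge0.
pose k := Ordinal N_gt0; pose c := (Num.sqrt s)^-1.
have c_neq0 : c != 0 by rewrite invr_eq0 sqrtr_eq0 -ltNge.
have cvV : in_V (c *: v).
  split; first by exists (set_factor f k (c *: f k)); rewrite tensor_vec_set_factorZ.
  rewrite [X in X *m _]linearZ /= -scalemxAl linearZ /= scalerA mxE -/s -expr2 exprVn.
  by rewrite sqr_sqrtr ?ltW // mulVf.
move: (QV0 _ cvV); rewrite /expval [X in X *m _ *m _]linearZ /= -scalemxAl linearZ /=.
rewrite -scalemxAl scalerA mxE.
by move/eqP; rewrite mulf_eq0 mulf_eq0 (negbTE c_neq0) => /eqP.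
Qed.

Section TensorMx.
Variables (R : comNzRingType) (N M : nat).
Implicit Types (A : 'I_N -> 'M[R]_M) (tau : {set 'I_N}).

Lemma eq_tensor_mx A B : A =1 B -> tensor_mx A = tensor_mx B.
Proof. by move=> AB; apply/matrixP => i j; rewrite !mxE; apply: eq_bigr => k _; rewrite AB. Qed.

Lemma ptrans_sumZ (I : finType) tau (c : I -> R) (F : I -> 'M[R]_(tdim N M)) :
  ptrans tau (\sum_i c i *: F i) = \sum_i c i *: ptrans tau (F i).
Proof.
by apply/matrixP => i j; rewrite !mxE !summxE; apply: eq_bigr => x _; rewrite !mxE.
Qed.

Lemma ptrans_tensor_mx tau A :
  ptrans tau (tensor_mx A) = tensor_mx (fun k => if k \in tau then (A k)^T else A k).
Proof.
apply/matrixP => i j; rewrite !mxE; apply: eq_bigr => k _.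
by rewrite /mi !enum_rankK !ffunE; case: (k \in tau); rewrite ?mxE.
Qed.

Lemma tensor_mxZ (a : 'I_N -> R) A :
  tensor_mx (fun k => a k *: A k) = (\prod_k a k) *: tensor_mx A.
Proof.
by apply/matrixP => i j; rewrite !mxE -big_split; apply: eq_bigr => k _; rewrite mxE.
Qed.

Lemma tensor_mx_delta (a b : mindex N M) :
  tensor_mx (fun k => delta_mx (a k) (b k)) = delta_mx (mrank a) (mrank b) :> 'M[R]__.
Proof.
apply/matrixP => i j; rewrite !mxE.
under eq_bigr do rewrite mxE.
rewrite prodr_nat_forall -!(can_eq (@enum_valK _)) !enum_rankK.
congr (nat_of_bool _)%:R.
apply/forallP/andP => [eq_ij | [/eqP <- /eqP <-] k]; last by rewrite /mi !eqxx.
by split; apply/eqP/ffunP => k; have /andP[/eqP ? /eqP ?] := eq_ij k.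
Qed.

Lemma tensor_mx_sum (Gam : finType) (G : Gam -> 'M[R]_M) (a : 'I_N -> Gam -> R) :
  tensor_mx (fun k => \sum_gm a k gm *: G gm) =
  \sum_(g : {ffun 'I_N -> Gam}) (\prod_k a k (g k)) *: tensor_mx (fun k => G (g k)).
Proof.
apply/matrixP => i j; rewrite !mxE summxE.
under eq_bigr do rewrite summxE.
under eq_bigr do under eq_bigr do rewrite mxE.
by rewrite bigA_distr_bigA /=; apply: eq_bigr => g _; rewrite !mxE -big_split.
Qed.

Lemma tensor_mx_span (Gam : finType) (G : Gam -> 'M[R]_M) :
  (forall X : 'M[R]_M, exists c : Gam -> R, X = \sum_gm c gm *: G gm) ->
  forall Q : 'M[R]_(tdim N M), exists c : {ffun 'I_N -> Gam} -> R,
    Q = \sum_g c g *: tensor_mx (fun k => G (g k)).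
Proof.
move=> G_span Q.
have [d dE] := fin_all_exists (fun p : 'I_M * 'I_M => G_span (delta_mx p.1 p.2)).
have delta_expand (a b : mindex N M) : delta_mx (mrank a) (mrank b) =
    \sum_(g : {ffun 'I_N -> Gam}) (\prod_k d (a k, b k) (g k)) *: tensor_mx (fun k => G (g k)).
  rewrite -tensor_mx_delta -(tensor_mx_sum G (fun k => d (a k, b k))).
  by apply: eq_tensor_mx => k; exact: (dE (a k, b k)).
exists (fun g => \sum_(a : mindex N M) \sum_(b : mindex N M)
                   Q (mrank a) (mrank b) * \prod_k d (a k, b k) (g k)).
rewrite {1}[Q]matrix_sum_delta sum_mindex.
under eq_bigr do rewrite sum_mindex.
under eq_bigr do under eq_bigr do rewrite delta_expand scaler_sumr.
under eq_bigr do rewrite exchange_big.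
rewrite exchange_big; apply: eq_bigr => g _.
rewrite scaler_suml; apply: eq_bigr => a _.
by rewrite scaler_suml; apply: eq_bigr => b _; rewrite scalerA.
Qed.

End TensorMx.

Section GellMannTensors.
Variables (R : numDomainType) (N M : nat) (Gam : finType).
Variables (G : Gam -> 'M[R]_M) (nonneg : Gam -> bool).
Hypothesis G_sym : forall gm, nonneg gm -> (G gm)^T = G gm.
Hypothesis G_antisym : forall gm, ~~ nonneg gm -> (G gm)^T = - G gm.
Local Notation gm_tensor g := (tensor_mx (fun k => G (g k))).
Implicit Types (g : {ffun 'I_N -> Gam}) (tau : {set 'I_N}).

Definition ptrans_sign g tau : R :=
  \prod_k (if (k \in tau) && ~~ nonneg (g k) then -1 else 1).

Lemma ptrans_gm_tensor tau g : ptrans tau (gm_tensor g) = ptrans_sign g tau *: gm_tensor g.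
Proof.
rewrite ptrans_tensor_mx /ptrans_sign -tensor_mxZ; apply: eq_tensor_mx => k.
case: (k \in tau) => /=; last by rewrite scale1r.
by case: (boolP (nonneg (g k))) => [/G_sym -> | /G_antisym ->] /=; rewrite ?scale1r ?scaleN1r.
Qed.

Lemma sum_ptrans_sign g : \sum_tau ptrans_sign g tau =
  if [forall k, nonneg (g k)] then #|{: {set 'I_N}}|%:R else 0.
Proof.
case: (boolP [forall k, nonneg (g k)]) => [/forallP g_nonneg | ].
  rewrite (eq_bigr (fun _ => 1)) ?sumr_const // => tau _.
  by apply: big1 => k _; rewrite g_nonneg andbF.
rewrite negb_forall => /existsP [k g_k].
(* tau |-> tau (+) {k} is an involution flipping the sign *)
have sum_opp : \sum_tau ptrans_sign g tau = - \sum_tau ptrans_sign g tau.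
  rewrite {1}(reindex_inj (inv_inj (symdiffK [set k]))) -sumrN; apply: eq_bigr => tau _.
  rewrite /ptrans_sign (bigD1 k) //= [in RHS](bigD1 k) //= !inE eqxx g_k /=.
  rewrite (eq_bigr (fun j => if (j \in tau) && ~~ nonneg (g j) then -1 else 1)); last first.
    by move=> j /negbTE j_k; rewrite !inE j_k addbF.
  by case: (k \in tau); rewrite /= ?mulN1r ?mul1r ?opprK.
by move/eqP: sum_opp; rewrite -subr_eq0 opprK -mulr2n mulrn_eq0 => /eqP.
Qed.

Lemma sum_ptrans_gm_combination (c : {ffun 'I_N -> Gam} -> R) :
  \sum_tau ptrans tau (\sum_g c g *: gm_tensor g) =
  #|{: {set 'I_N}}|%:R *:
    \sum_(g : {ffun 'I_N -> Gam} | [forall k, nonneg (g k)]) c g *: gm_tensor g.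
Proof.
under eq_bigr do rewrite ptrans_sumZ.
under eq_bigr do under eq_bigr do rewrite ptrans_gm_tensor scalerA.
rewrite exchange_big scaler_sumr [RHS]big_mkcond /=; apply: eq_bigr => g _.
rewrite -scaler_suml -mulr_sumr sum_ptrans_sign.
by case: [forall k, _]; rewrite ?mulr0 ?scale0r ?scaler0 // scalerA mulrC.
Qed.

Lemma sum_ptrans_eq0_gm_expansion :
  (forall X : 'M[R]_M, exists c : Gam -> R, X = \sum_gm c gm *: G gm) ->
  forall Q : 'M[R]_(tdim N M),
  \sum_tau ptrans tau Q = 0 <->
  exists c : {ffun 'I_N -> Gam} -> R,
    Q = \sum_g c g *: gm_tensor g /\ (forall g, (forall k, nonneg (g k)) -> c g = 0).
Proof.
move=> G_span Q; split=> [PQ0 | [c [-> c_nonneg]]]; last first.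
  rewrite sum_ptrans_gm_combination big1 ?scaler0 // => g /forallP g_nonneg.
  by rewrite c_nonneg ?scale0r.
have [c Qc] := tensor_mx_span G_span Q.
exists (fun g => if [forall k, nonneg (g k)] then 0 else c g); split; last first.
  by move=> g /forallP ->.
have sym_part0 : \sum_(g : {ffun 'I_N -> Gam} | [forall k, nonneg (g k)]) c g *: gm_tensor g = 0.
  move/eqP: PQ0; rewrite Qc sum_ptrans_gm_combination scalemx_eq0 pnatr_eq0.
  by rewrite eqn0Ngt card_sets_gt0 => /eqP.
rewrite Qc [RHS](bigID (fun g : {ffun 'I_N -> Gam} => [forall k, nonneg (g k)])) /=.
rewrite [X in _ = X + _]big1 => [|g ->]; last exact: scale0r.
rewrite [LHS](bigID (fun g : {ffun 'I_N -> Gam} => [forall k, nonneg (g k)])) /=.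
by rewrite sym_part0 !add0r; apply: eq_bigr => g /negbTE ->.
Qed.

End GellMannTensors.

Unset Implicit Arguments.

Theorem proposition5 (R : realType) (N M : nat) (Gam : finType)
  (G : Gam -> 'M[R]_M) (nonneg : Gam -> bool) (g0 : Gam)
  (HG : gell_mann_family G nonneg g0)
  (Q : 'M[R]_(tdim N M)) (HQ : Q^T = Q) :
  [/\ ((forall v, in_V v -> expval Q v = 0) <->
       \sum_(tau : {set 'I_N}) ptrans tau Q = 0),
      (\sum_(tau : {set 'I_N}) ptrans tau Q = 0 <->
       exists c : {ffun 'I_N -> Gam} -> R,
         Q = \sum_(g : {ffun 'I_N -> Gam}) c g *: tensor_mx (fun k => G (g k)) /\
         (forall g : {ffun 'I_N -> Gam}, (forall k, nonneg (g k)) -> c g = 0)) &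
      ((forall v, in_V v -> expval Q v = 0) <->
       exists c : {ffun 'I_N -> Gam} -> R,
         Q = \sum_(g : {ffun 'I_N -> Gam}) c g *: tensor_mx (fun k => G (g k)) /\
         (forall g : {ffun 'I_N -> Gam}, (forall k, nonneg (g k)) -> c g = 0))].
Proof.
case: HG => _ [G_span [_ [_ [_ [_ [G_sym [G_antisym _]]]]]]].
have V_iff_sum := iff_trans (vanish_on_V Q) (iff_sym (sum_ptrans_eq0 Q)).
have sum_iff_gm := sum_ptrans_eq0_gm_expansion G_sym G_antisym G_span Q.
by split=> //; apply: iff_trans V_iff_sum sum_iff_gm.
Qed.
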